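(* Let $\varepsilon,\delta>0$ and let $A\subseteq\mathbb{F}_2^n$ be nonempty. Let $m=\log_2|\mathrm{span}(A)|$ and $k=\lceil 2m/\varepsilon\rceil\cdot\lceil\log_2(1/\delta)\rceil$. If $v_1,\dots,v_k$ are independent uniformly random elements of $A$, then with probability at least $1-\delta$, $$|A\cap\mathrm{span}(\{v_1,\dots,v_k\})|\ge(1-\varepsilon)|A|.$$
   Context: $\mathrm{span}(S)$ denotes the $\mathbb{F}_2$-linear span of $S$. *)

From HB Require Import structures.
From mathcomp Require Import all_boot all_order all_algebra all_field.
From mathcomp Require Import reals exp.
Set Implicit Arguments. Unset Strict Implicit. Unset Printing Implicit Defensive.
Import Order.TTheory GRing.Theory Num.Theory.
Local Open Scope ring_scope.

Definition log2 {R : realType} (x : R) : R := ln x / ln 2.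

Definition spanset n (S : {set 'rV['F_2]_n}) : {set 'rV['F_2]_n} :=
  [set x | x \in <<enum S>>%VS].

(* the sample-size parameter k = ceil(2m/eps) * ceil(log2(1/delta)),
   with m = log2 |span A| (|span A| is a power of 2, so trunc_log is exact).
   ceil(2m/eps) >= 0 always; for delta > 1 the second factor is <= 0 and we
   take its absolute value (the statement is then trivial anyway). *)
Definition kparam {R : realType} n (A : {set 'rV['F_2]_n}) (eps delta : R) : nat :=
  let m := trunc_log 2 #|spanset A| in
  (`|Num.ceil (2 * m%:R / eps)| * `|Num.ceil (log2 (1 / delta))|)%N.

Definition good {R : realType} n (A : {set 'rV['F_2]_n}) (eps : R) k
    (v : {ffun 'I_k -> 'rV['F_2]_n}) : bool :=
  (1 - eps) * #|A|%:R <= #|A :&: spanset [set v i | i : 'I_k]|%:R.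

From HB Require Import structures.
From mathcomp Require Import all_boot all_order all_algebra all_field.
From mathcomp Require Import reals exp.
From mathcomp Require Import lra.
Set Implicit Arguments. Unset Strict Implicit. Unset Printing Implicit Defensive.
Import Order.TTheory GRing.Theory Num.Theory.
Local Open Scope ring_scope.

(* Let U_j be the span of the first j samples and m = dim (span A).  While A
   is undercovered by U_j, a fresh sample leaves U_j with probability more
   than eps, and then raises dim U_j by one.  Hence the defect
   dim (U_j + span A) - dim U_j, which lies between 1 and m as long as A is
   undercovered, drops in expectation by more than eps per step, so after
   s >= 2m/eps samples A is still undercovered with probability at most 1/2.
   The next s samples start afresh from U_s, so t such blocks fail with
   probability at most 2^-t <= delta. *)

Section FfunCons.
Variables (T : Type) (k : nat).

Definition ffun_cons (a : T) (w : {ffun 'I_k -> T}) : {ffun 'I_k.+1 -> T} :=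
  [ffun i => if unlift ord0 i is Some j then w j else a].

Definition ffun_uncons (v : {ffun 'I_k.+1 -> T}) : T * {ffun 'I_k -> T} :=
  (v ord0, [ffun j => v (lift ord0 j)]).

Lemma ffun_cons_bij : bijective (fun p : T * {ffun 'I_k -> T} => ffun_cons p.1 p.2).
Proof.
exists ffun_uncons.
- case=> a w /=; rewrite /ffun_uncons /ffun_cons ffunE unlift_none; congr pair.
  by apply/ffunP=> j; rewrite !ffunE liftK.
- move=> v; apply/ffunP=> i; rewrite /ffun_cons ffunE /=.
  by case: unliftP => [j ->|->]; rewrite ?ffunE.
Qed.

Lemma forall_ffun_cons (P : pred T) a (w : {ffun 'I_k -> T}) :
  [forall i, P (ffun_cons a w i)] = P a && [forall j, P (w j)].
Proof.
apply/forallP/andP => [Pv | [Pa /forallP Pw] i].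
- split; first by have := Pv ord0; rewrite ffunE unlift_none.
  by apply/forallP => j; have := Pv (lift ord0 j); rewrite ffunE liftK.
- by rewrite ffunE; case: unliftP.
Qed.

End FfunCons.

Lemma codom_ffun_cons (T : eqType) k a (w : {ffun 'I_k -> T}) :
  codom (ffun_cons a w) =i a :: codom w.
Proof.
move=> x; rewrite inE; apply/codomP/idP.
- case=> i ->; rewrite ffunE; case: unliftP => [j _| _]; rewrite ?eqxx //.
  by rewrite codom_f orbT.
- case/orP => [/eqP -> | /codomP [j ->]]; [exists ord0 | exists (lift ord0 j)];
  by rewrite ffunE ?unlift_none ?liftK.
Qed.

Lemma span_codom_ffun_cons (K : fieldType) (vT : vectType K) k a
    (w : {ffun 'I_k -> vT}) :
  <<codom (ffun_cons a w)>>%VS = (<[a]> + <<codom w>>)%VS.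
Proof. by rewrite -span_cons; apply/eq_span/codom_ffun_cons. Qed.

Lemma span_codom_ffun0 (K : fieldType) (vT : vectType K) (v : {ffun 'I_0 -> vT}) :
  <<codom v>>%VS = 0%VS.
Proof.
by rewrite -span_nil; apply: eq_span => x; rewrite in_nil; apply/codomP; case; case.
Qed.

Section FailureProbability.
Variables (R : realFieldType) (K : finFieldType) (n : nat) (eps : R).
Variable A : {set 'rV[K]_n}.
Local Notation V := 'rV[K]_n.

Definition undercovering (U : {vspace V}) : bool :=
  #|A :&: [set x | x \in U]|%:R < (1 - eps) * #|A|%:R.

Definition bad_count (U : {vspace V}) k : nat :=
  \sum_(v : {ffun 'I_k -> V}) ([forall i, v i \in A] && undercovering (U + <<codom v>>)).

Definition fail_prob U k : R := (bad_count U k)%:R / (#|A| ^ k)%:R.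

Lemma undercoveringS U W : (U <= W)%VS -> undercovering W -> undercovering U.
Proof.
move=> sUW; apply: le_lt_trans; rewrite ler_nat; apply/subset_leq_card/setIS.
by apply/subsetP=> x; rewrite !inE; apply: (subvP sUW).
Qed.

Lemma bad_count0 U : bad_count U 0 = undercovering U.
Proof.
set v0 : {ffun 'I_0 -> V} := [ffun=> 0].
rewrite /bad_count (big_pred1 v0) => [|v]; last by apply/esym/eqP/ffunP; case.
have -> : [forall i, v0 i \in A] by apply/forallP; case.
by rewrite span_codom_ffun0 addv0.
Qed.

Lemma bad_countS U k :
  bad_count U k.+1 = (\sum_(a in A) bad_count (U + <[a]>) k)%N.
Proof.
rewrite /bad_count (reindex _ (onW_bij _ (ffun_cons_bij _ k))) /=.
rewrite -(pair_bigA _ (fun a w => [forall i, ffun_cons a w i \in A] &&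
  undercovering (U + <<codom (ffun_cons a w)>>) : nat)) /=.
rewrite (bigID (mem A)) /= [X in (_ + X)%N]big1 ?addn0 => [|a aA]; last first.
  by apply: big1 => w _; rewrite (forall_ffun_cons (mem A)) /= (negbTE aA).
apply: eq_bigr => a aA; apply: eq_bigr => w _.
by rewrite (forall_ffun_cons (mem A)) /= aA span_codom_ffun_cons addvA.
Qed.

Lemma fail_prob0 U : fail_prob U 0 = (undercovering U)%:R.
Proof. by rewrite /fail_prob bad_count0 expn0 divr1. Qed.

Lemma fail_probS U k :
  fail_prob U k.+1 = (\sum_(a in A) fail_prob (U + <[a]>) k) / #|A|%:R.
Proof.
rewrite /fail_prob bad_countS natr_sum -mulr_suml expnS natrM invfM.
by rewrite [_^-1 * _]mulrC mulrA.
Qed.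

Lemma fail_prob_ge0 U k : 0 <= fail_prob U k.
Proof. by rewrite divr_ge0. Qed.

Lemma fail_prob_covered U k : ~~ undercovering U -> fail_prob U k = 0.
Proof.
move=> coverU; rewrite /fail_prob /bad_count big1 ?mul0r // => v _.
case: (undercovering _) / idP => [|_]; last by rewrite andbF.
by move/(undercoveringS (addvSl _ _)); rewrite (negbTE coverU).
Qed.

Hypothesis A_neq0 : A != set0.

Lemma card_A_gt0 : 0 < #|A|%:R :> R.
Proof. by rewrite ltr0n card_gt0. Qed.

Lemma fail_prob_le1 U k : fail_prob U k <= 1.
Proof.
elim: k U => [|k IHk] U; first by rewrite fail_prob0 lern1 leq_b1.
rewrite fail_probS ler_pdivrMr ?card_A_gt0 // mul1r -sumr_const.
exact: ler_sum.
Qed.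

Hypothesis eps_ge0 : 0 <= eps.

Definition spanA : {vspace V} := <<enum A>>%VS.

Lemma memv_spanA a : a \in A -> a \in spanA.
Proof. by move=> aA; rewrite memv_span ?mem_enum. Qed.

Lemma subv_spanA_covering U : (spanA <= U)%VS -> ~~ undercovering U.
Proof.
move=> sAU; rewrite /undercovering -leNgt.
have -> : A :&: [set x | x \in U] = A.
  by apply/setIidPl/subsetP => a /memv_spanA aA; rewrite inE (subvP sAU).
by rewrite ler_piMl // lerBlDr lerDl.
Qed.

Definition defect U : R := (\dim (U + spanA))%:R - (\dim U)%:R.

Lemma defect_ge0 U : 0 <= defect U.
Proof. by rewrite subr_ge0 ler_nat dimvS // addvSl. Qed.

Lemma defect_le_dim U : defect U <= (\dim spanA)%:R.
Proof.
rewrite lerBlDl -natrD ler_nat.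
by rewrite -(dimv_sum_cap U spanA) leq_addr.
Qed.

Lemma undercovering_defect_ge1 U : undercovering U -> 1 <= defect U.
Proof.
move=> bad_U; rewrite lerBrDr addrC natr1 ler_nat.
rewrite (ltn_leqif (dimv_leqif_sup (addvSl U spanA))).
by apply: contraL bad_U => /(subv_trans (addvSr U _)) /subv_spanA_covering.
Qed.

Lemma defect_addv_line U a :
  a \in A -> defect (U + <[a]>) + (a \notin U)%:R <= defect U.
Proof.
move=> aA; have dim_line : (\dim U + (a \notin U) <= \dim (U + <[a]>))%N.
  case aU : (a \in U); first by rewrite addn0 dimvS // addvSl.
  rewrite addn1 (ltn_leqif (dimv_leqif_sup (addvSl U <[a]>))).
  by apply: contraFN aU => /subvP; apply; rewrite memvE addvSr.
have absorb : (<[a]> + spanA)%VS = spanA.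
  by apply/addv_idPr; rewrite -memvE memv_spanA.
move: dim_line; rewrite /defect -addvA absorb -(ler_nat R) natrD; lra.
Qed.

Lemma undercovering_outside U :
  undercovering U -> eps * #|A|%:R < (\sum_(a in A) (a \notin U)%:R : R).
Proof.
have -> : (\sum_(a in A) (a \notin U)%:R : R) = #|A :\: [set x | x \in U]|%:R.
  rewrite -natr_sum -big_mkcondr /= sum1dep_card.
  by congr (_%:R); apply: eq_card => x; rewrite !inE andbC.
rewrite /undercovering -(cardsID [set x | x \in U] A) natrD; lra.
Qed.

Lemma fail_prob_le_defect j U : eps * j%:R * fail_prob U j <= defect U.
Proof.
elim: j U => [|j IHj] U; first by rewrite mulr0 mul0r defect_ge0.
have [bad_U|/fail_prob_covered->] := boolP (undercovering U); last first.
  by rewrite mulr0 defect_ge0.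
have step a : a \in A ->
    eps * j.+1%:R * fail_prob (U + <[a]>)%VS j <= defect U - (a \notin U)%:R + eps.
  move=> aA; rewrite -natr1 mulrDr mulr1 mulrDl.
  apply: lerD; last by rewrite ler_piMr ?fail_prob_le1.
  rewrite lerBrDr; apply: le_trans (defect_addv_line U aA).
  by rewrite lerD2r IHj.
rewrite fail_probS mulrA ler_pdivrMr ?card_A_gt0 // mulr_sumr.
apply: (le_trans (ler_sum _ step)).
rewrite big_split sumrB /= !sumr_const mulr_natr -addrA gerDl addrC subr_le0.
by rewrite -mulr_natr ltW ?undercovering_outside.
Qed.

Lemma fail_prob_le_half s U : 2 * (\dim spanA)%:R <= eps * s%:R ->
  fail_prob U s <= 2^-1 * (undercovering U)%:R.
Proof.
move=> s_large; have [bad_U|/fail_prob_covered->] := boolP (undercovering U); last first.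
  by rewrite mulr0.
set d : R := (\dim spanA)%:R; set f := fail_prob U s.
have d_gt0 : 0 < d.
  apply: lt_le_trans ltr01 (le_trans (undercovering_defect_ge1 bad_U) _).
  exact: defect_le_dim.
have : d * (2 * f) <= d * 1.
  rewrite mulr1 mulrA [d * 2]mulrC (le_trans _ (defect_le_dim U)) //.
  by rewrite (le_trans _ (fail_prob_le_defect s U)) // ler_wpM2r ?fail_prob_ge0.
rewrite ler_pM2l // mulr1; lra.
Qed.

Lemma fail_prob_addn_le j2 c :
  (forall U, fail_prob U j2 <= c * (undercovering U)%:R) ->
  forall j1 U, fail_prob U (j1 + j2) <= c * fail_prob U j1.
Proof.
move=> fail_j2; elim=> [|j1 IHj1] U; first by rewrite add0n fail_prob0.
rewrite addSn !fail_probS mulrA ler_wpM2r ?invr_ge0 // mulr_sumr.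
by apply: ler_sum => a _; apply: IHj1.
Qed.

Lemma fail_prob_mul_le s t U : 2 * (\dim spanA)%:R <= eps * s%:R ->
  fail_prob U (t * s) <= 2^-1 ^+ t * (undercovering U)%:R.
Proof.
move=> s_large; elim: t U => [|t IHt] U; first by rewrite mul0n fail_prob0 mul1r.
rewrite mulSn; apply: le_trans (fail_prob_addn_le IHt s U) _.
by rewrite exprSr -mulrA ler_wpM2l ?exprn_ge0 ?invr_ge0 ?fail_prob_le_half.
Qed.

End FailureProbability.

Lemma le_natr_abs_ceil (R : archiRealDomainType) (x : R) : x <= (`|Num.ceil x|%N)%:R.
Proof. by rewrite natr_absz (le_trans (ceil_ge x)) // ler_int ler_norm. Qed.

Lemma expr_half_le (R : realType) (delta : R) t :
  0 < delta -> log2 (1 / delta) <= t%:R -> 2^-1 ^+ t <= delta.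
Proof.
move=> delta_gt0; have ln2_gt0 : 0 < ln (2 : R) by rewrite ln_gt0 ?ltr1n.
rewrite /log2 ler_pdivrMr // mulr_natl -lnXn // ler_ln ?posrE ?exprn_gt0 ?divr_gt0 //.
rewrite mul1r exprVn => inv_delta_le.
by rewrite -[delta]invrK lef_pV2 ?posrE ?exprn_gt0 ?invr_gt0 // -div1r.
Qed.

Section GoodSamples.
Variables (R : realType) (n : nat) (eps : R) (A : {set 'rV['F_2]_n}).

Lemma good_undercoveringE k (v : {ffun 'I_k -> 'rV['F_2]_n}) :
  good A eps v = ~~ undercovering eps A <<codom v>>.
Proof.
rewrite /good /undercovering /spanset -leNgt.
suff -> : <<enum [set v i | i : 'I_k]>>%VS = <<codom v>>%VS by [].
apply: eq_span => y; rewrite mem_enum.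
by apply/imsetP/codomP => [[i _ ->]|[i ->]]; exists i.
Qed.

Lemma card_good_tuples k :
  (#|[set v : {ffun 'I_k -> 'rV['F_2]_n} | [forall i, v i \in A] && good A eps v]|
    + bad_count eps A 0 k)%N = (#|A| ^ k)%N.
Proof.
rewrite -sum1dep_card big_mkcond /= /bad_count -big_split /=.
have -> : (#|A| ^ k = #|[set v : {ffun 'I_k -> 'rV['F_2]_n} | v \in ffun_on A]|)%N.
  by rewrite cardsE card_ffun_on card_ord.
rewrite -sum1dep_card [RHS]big_mkcond /=.
apply: eq_bigr => v _; rewrite add0v good_undercoveringE.
have -> : (v \in ffun_on A) = [forall i, v i \in A] by apply/ffun_onP/forallP.
by case: [forall _, _]; case: undercovering.
Qed.

Lemma prob_good_tuples k : A != set0 ->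
  #|[set v : {ffun 'I_k -> 'rV['F_2]_n} | [forall i, v i \in A] && good A eps v]|%:R
    / (#|A| ^ k)%:R = 1 - fail_prob eps A 0 k.
Proof.
move=> A_neq0; have Ak_neq0 : (#|A| ^ k)%:R != 0 :> R.
  by rewrite pnatr_eq0 -lt0n expn_gt0 card_gt0 A_neq0.
apply/eqP; rewrite eq_sym subr_eq -mulrDl -natrD card_good_tuples divff //.
Qed.

Lemma trunc_log_card_spanset : trunc_log 2 #|spanset A| = \dim (spanA A).
Proof. by rewrite /spanset cardsE card_vspace card_Fp // trunc_expnK. Qed.

End GoodSamples.

Theorem lemma5p5 (R : realType) (n : nat) (eps delta : R)
    (A : {set 'rV['F_2]_n}) :
  0 < eps -> 0 < delta -> A != set0 ->
  let k := kparam A eps delta in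
  1 - delta <=
    #|[set v : {ffun 'I_k -> 'rV['F_2]_n} |
        [forall i, v i \in A] && good A eps v]|%:R / (#|A| ^ k)%:R.
Proof.
move=> eps_gt0 delta_gt0 A_neq0 /=.
rewrite prob_good_tuples // lerD2l lerN2 /kparam trunc_log_card_spanset mulnC.
set s := `|Num.ceil (2 * _ / eps)|%N; set t := `|Num.ceil (log2 _)|%N.
have s_large : 2 * (\dim (spanA A))%:R <= eps * s%:R.
  have := le_natr_abs_ceil (2 * (\dim (spanA A))%:R / eps).
  by rewrite ler_pdivrMr // [_ * eps]mulrC.
apply: le_trans (fail_prob_mul_le A_neq0 (ltW eps_gt0) t 0%VS s_large) _.
apply: le_trans (expr_half_le delta_gt0 (le_natr_abs_ceil _)).
by rewrite ler_piMr ?exprn_ge0 ?invr_ge0 ?lern1 ?leq_b1.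
Qed.
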